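(* Let $G$ be a simple graph with $m$ edges and girth $g(G)\ge 4$. Define $\varrho_1(G)=\sum_{uv\in E(G)} m(G-\{u,v\})\,M_1(G-\{u,v\})$, where $m(H)$ is the number of edges of $H$. Then $$\varrho_1(G)=(m^2+4m+5)M_1(G)-(m+2)F(G)-(4m+6)M_2(G)+M_1^4(G)-M_1(G)^2+\alpha(G)-2m^2-2m+2\gamma(G),$$ where $M_1(G)^2$ denotes the square of the number $M_1(G)$.
   Context: All graphs are finite, simple and undirected; $d_G(v)$ is the degree of $v$; $G-\{u,v\}$ is obtained by deleting vertices $u,v$. $M_1^\alpha(G)=\sum_{v}d_G(v)^\alpha$ (exponent on degrees), $M_1=M_1^2$, $F=M_1^3$; $M_2(G)=\sum_{uv\in E(G)}d_G(u)d_G(v)$; $\alpha(G)=\sum_{uv\in E(G)}d_G(u)d_G(v)[d_G(u)+d_G(v)]$. A vertex $v$ is said to be incident to an edge $e=xy$ (with $v\ne x,y$) if $\{vx,vy\}\cap E(G)\neq\emptyset$; $\Lambda(G)$ is the set of all pairs $\{v,e\}$ with $v\in V(G)$, $e\in E(G)$ and $v$ incident to $e$ in this sense; and $\gamma(G)=\sum_{\{v,xy\}\in\Lambda(G)}d_G(v)\big[d_G(x)+d_G(y)\big]$. *)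

From mathcomp Require Import all_boot all_order all_algebra.
Set Implicit Arguments. Unset Strict Implicit. Unset Printing Implicit Defensive.

Section Graph.
Variables (T : finType) (e : rel T).

Definition simple_graph : Prop := symmetric e /\ irreflexive e.

(* girth >= 4: no triangles (a forest has infinite girth) *)
Definition girth_ge4 : Prop := forall x y z : T, e x y -> e y z -> ~~ e x z.

(* Sum of F x y over the edges xy of the subgraph induced on D
   (each unordered edge counted once, via the enumeration order of T). *)
Definition edge_sum_in (D : {set T}) (F : T -> T -> nat) : nat :=
  \sum_(x in D) \sum_(y in D | e x y && (enum_rank x < enum_rank y)%N) F x y.

Definition deg_in (D : {set T}) (v : T) : nat := #|[set w in D | e v w]|.

Definition size_in (D : {set T}) : nat := edge_sum_in D (fun _ _ => 1%N).

Definition M1a_in (a : nat) (D : {set T}) : nat := \sum_(v in D) deg_in D v ^ a.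

Definition deg (v : T) : nat := deg_in setT v.
Definition nedges : nat := size_in setT.
Definition M1a (a : nat) : nat := M1a_in a setT.
Definition M1 : nat := M1a 2.
Definition Fidx : nat := M1a 3.
Definition M2 : nat := edge_sum_in setT (fun x y => deg x * deg y).
Definition alpha_idx : nat :=
  edge_sum_in setT (fun x y => deg x * deg y * (deg x + deg y)).

Definition incident (v x y : T) : bool := [&& v != x, v != y & e v x || e v y].

(* gamma(G) = sum over pairs {v, xy} in Lambda(G) of d(v)(d(x)+d(y)) *)
Definition gamma_idx : nat :=
  edge_sum_in setT (fun x y =>
    \sum_(v | incident v x y) deg v * (deg x + deg y)).

(* G - {u,v} is the subgraph induced on V \ {u,v} *)
Definition rho1 : nat :=
  edge_sum_in setT (fun u v =>
    size_in (~: [set u; v]) * M1a_in 2 (~: [set u; v])).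

End Graph.

(* Write d(x) for the degree of x, S(x) for the sum of the degrees of the
   neighbours of x, and m for the number of edges.  For an edge xy of a
   graph without triangles, deleting x and y leaves a graph with
     m(G-{x,y})  = m + 1 - d(x) - d(y),
     M1(G-{x,y}) = M1 - d(x)^2 - d(y)^2 + 3d(x) + 3d(y) - 2 - 2S(x) - 2S(y);
   the second formula holds because every other vertex w loses exactly
   [w~x] + [w~y] <= 1 neighbours.  Hence rho_1 is the sum over the edges of
   a polynomial in d(x), d(y), S(x), S(y), and each monomial sum is a known
   index: sum d(x)^k = M1^(k+1), sum d(x)d(y) = M2, sum S(x) = M2, and
   sum (S(x)+S(y)-d(x)-d(y))(d(x)+d(y)) = gamma (again by triangle-freeness).
   All sums are computed in int over ordered adjacent pairs ("arcs"); by the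
   handshake lemma an arc sum is twice the corresponding edge sum. *)

Set Warnings "-notation-overridden,-ambiguous-paths,-notation-incompatible-prefix".
From mathcomp Require Import all_boot all_order all_algebra.
From mathcomp Require Import ring.
Set Implicit Arguments. Unset Strict Implicit. Unset Printing Implicit Defensive.
Import GRing.Theory.
Local Open Scope ring_scope.

Definition chi (b : bool) : int := (b : nat)%:Z.

Lemma chiT : chi true = 1. Proof. by []. Qed.
Lemma chiF : chi false = 0. Proof. by []. Qed.

Lemma Posz_sum (I : finType) (P : pred I) (F : I -> nat) :
  ((\sum_(i | P i) F i)%N)%:Z = \sum_(i | P i) (F i)%:Z.
Proof. exact: (big_morph Posz PoszD (erefl (Posz 0))). Qed.

Lemma PoszX (n k : nat) : ((n ^ k)%N)%:Z = n%:Z ^+ k.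
Proof. by rewrite -!natz natrX. Qed.

Lemma sum_setC2 (T : finType) (u v : T) (f : T -> int) : u != v ->
  \sum_(w in ~: [set u; v]) f w = \sum_w f w - f u - f v.
Proof.
move=> uv; rewrite [\sum_w f w](bigD1 u) // (bigD1 v) /=; last by rewrite eq_sym.
have -> : \sum_(w | (w != u) && (w != v)) f w = \sum_(w in ~: [set u; v]) f w.
  by apply: eq_bigl => w; rewrite !inE negb_or.
ring.
Qed.

Lemma sum_chi_eq (T : finType) (u : T) (f : T -> int) :
  \sum_w chi (w == u) * f w = f u.
Proof.
rewrite (bigD1 u) //= eqxx big1 ?addr0 ?chiT ?mul1r // => w /negbTE ->.
by rewrite chiF mul0r.
Qed.

Lemma sum_setT (T : finType) (f : T -> int) : \sum_(x in setT) f x = \sum_x f x.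
Proof. by apply: eq_bigl => x; rewrite in_setT. Qed.

Section SimpleGraph.
Variables (T : finType) (e : rel T).
Hypotheses (e_sym : symmetric e) (e_irr : irreflexive e).

Lemma adj_neq x y : e x y -> x != y.
Proof. by apply: contraTneq => ->; rewrite e_irr. Qed.

Lemma edge_sum_handshake (D : {set T}) (F : T -> T -> nat) :
  (forall x y, F x y = F y x) ->
  (2 * edge_sum_in e D F = \sum_(x in D) \sum_(y in D | e x y) F x y)%N.
Proof.
move=> F_sym; rewrite /edge_sum_in mul2n -addnn.
have split_rank x : (\sum_(y in D | e x y) F x y =
    \sum_(y in D | e x y && (enum_rank x < enum_rank y)%N) F x y +
    \sum_(y in D | e x y && (enum_rank y < enum_rank x)%N) F x y)%N.
  rewrite (bigID (fun y => (enum_rank x < enum_rank y)%N)) /=.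
  congr (_ + _)%N; apply: eq_bigl => y; rewrite -!andbA; congr (_ && _).
  case exy: (e x y) => //=.
  have ranks_neq : enum_rank y != enum_rank x.
    by apply/eqP => /enum_rank_inj yx; rewrite yx e_irr in exy.
  by rewrite -leqNgt ltn_neqAle ranks_neq.
rewrite (eq_bigr _ (fun x _ => split_rank x)) big_split /=; congr (_ + _)%N.
rewrite (exchange_big_dep (mem D)) /=; last by move=> x y _ /andP[].
apply: eq_bigr => y yD; apply: eq_big => [x|x _]; last exact: F_sym.
by rewrite yD /= e_sym.
Qed.

Definition d (x : T) : int := (deg e x)%:Z.

Definition nbr_deg (x : T) : int := \sum_w chi (e x w) * d w.

Definition arc_sum (F : T -> T -> int) : int :=
  \sum_x \sum_y chi (e x y) * F x y.

Lemma eq_arc_sum F G :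
  (forall x y, e x y -> F x y = G x y) -> arc_sum F = arc_sum G.
Proof.
move=> FG; apply: eq_bigr => x _; apply: eq_bigr => y _.
by case exy: (e x y); rewrite ?chiF ?mul0r // FG.
Qed.

Lemma arc_sumD F G :
  arc_sum (fun x y => F x y + G x y) = arc_sum F + arc_sum G.
Proof.
rewrite /arc_sum -big_split; apply: eq_bigr => x _.
by rewrite -big_split; apply: eq_bigr => y _; rewrite mulrDr.
Qed.

Lemma arc_sumN F : arc_sum (fun x y => - F x y) = - arc_sum F.
Proof.
rewrite /arc_sum -sumrN; apply: eq_bigr => x _.
by rewrite -sumrN; apply: eq_bigr => y _; rewrite mulrN.
Qed.

Lemma arc_sumZ c F : arc_sum (fun x y => c * F x y) = c * arc_sum F.
Proof.
rewrite /arc_sum mulr_sumr; apply: eq_bigr => x _.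
by rewrite mulr_sumr; apply: eq_bigr => y _; rewrite mulrCA.
Qed.

Lemma arc_sum_swap F : arc_sum F = arc_sum (fun x y => F y x).
Proof.
by rewrite /arc_sum exchange_big; apply: eq_bigr => x _; apply: eq_bigr => y _; rewrite e_sym.
Qed.

Lemma arc_sum_edge_sum (F : T -> T -> nat) : (forall x y, F x y = F y x) ->
  2 * (edge_sum_in e setT F)%:Z = arc_sum (fun x y => (F x y)%:Z).
Proof.
move=> F_sym; rewrite -[2]/(Posz 2) -PoszM edge_sum_handshake // Posz_sum sum_setT.
apply: eq_bigr => x _; rewrite Posz_sum big_mkcond; apply: eq_bigr => y _.
by rewrite in_setT; case: (e x y); rewrite ?chiT ?chiF ?mul1r ?mul0r.
Qed.

Lemma deg_in_chi (D : {set T}) x : (deg_in e D x)%:Z = \sum_(w in D) chi (e x w).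
Proof.
rewrite /deg_in -sum1_card Posz_sum big_mkcond [RHS]big_mkcond /=.
by apply: eq_bigr => w _; rewrite !inE; case: (w \in D); case: (e x w).
Qed.

Lemma sum_chi_adj x : \sum_y chi (e x y) = d x.
Proof. by rewrite /d /deg deg_in_chi sum_setT. Qed.

Lemma sum_chi_adj' x : \sum_y chi (e y x) = d x.
Proof. by rewrite -sum_chi_adj; apply: eq_bigr => y _; rewrite e_sym. Qed.

Lemma nbr_deg' x : \sum_y chi (e y x) * d y = nbr_deg x.
Proof. by apply: eq_bigr => y _; rewrite e_sym. Qed.

Lemma M1a_deg k : (M1a e k)%:Z = \sum_x d x ^+ k.
Proof.
by rewrite /M1a /M1a_in Posz_sum sum_setT; apply: eq_bigr => x _; rewrite PoszX.
Qed.

Lemma arc_sum1 : arc_sum (fun _ _ => 1) = 2 * (nedges e)%:Z.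
Proof. by rewrite /nedges /size_in arc_sum_edge_sum. Qed.

Lemma sum_deg : \sum_x d x = 2 * (nedges e)%:Z.
Proof.
rewrite -arc_sum1; apply: eq_bigr => x _.
by rewrite -sum_chi_adj; apply: eq_bigr => y _; rewrite mulr1.
Qed.

Lemma arc_sum_degX k : arc_sum (fun x _ => d x ^+ k) = (M1a e k.+1)%:Z.
Proof.
by rewrite M1a_deg; apply: eq_bigr => x _; rewrite -mulr_suml sum_chi_adj exprS.
Qed.

Lemma arc_sum_degX' k : arc_sum (fun _ y => d y ^+ k) = (M1a e k.+1)%:Z.
Proof. by rewrite arc_sum_swap arc_sum_degX. Qed.

Lemma arc_sum_M2 : arc_sum (fun x y => d x * d y) = 2 * (M2 e)%:Z.
Proof.
rewrite /M2 arc_sum_edge_sum; last by move=> *; rewrite mulnC.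
by apply: eq_arc_sum => x y _; rewrite PoszM.
Qed.

Lemma arc_sum_alpha :
  arc_sum (fun x y => d x * d y * (d x + d y)) = 2 * (alpha_idx e)%:Z.
Proof.
rewrite /alpha_idx arc_sum_edge_sum; last by move=> x y; rewrite [(deg e x * _)%N]mulnC addnC.
by apply: eq_arc_sum => x y _; rewrite !PoszM PoszD.
Qed.

Lemma arc_sum_nbr_deg : arc_sum (fun x _ => nbr_deg x) = 2 * (M2 e)%:Z.
Proof.
rewrite -arc_sum_M2; apply: eq_bigr => x _; rewrite -mulr_suml sum_chi_adj mulr_sumr.
by apply: eq_bigr => y _; rewrite mulrCA.
Qed.

Lemma arc_sum_nbr_deg' : arc_sum (fun _ y => nbr_deg y) = 2 * (M2 e)%:Z.
Proof. by rewrite arc_sum_swap arc_sum_nbr_deg. Qed.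

Lemma size_delete_edge x y : e x y ->
  (size_in e (~: [set x; y]))%:Z = (nedges e)%:Z + 1 - d x - d y.
Proof.
move=> exy; apply: (@mulfI _ 2) => //.
rewrite /size_in -[2]/(Posz 2) -PoszM edge_sum_handshake // Posz_sum.
have deg_rest u : ((\sum_(w in ~: [set x; y] | e u w) 1)%N)%:Z = d u - chi (e u x) - chi (e u y).
  rewrite Posz_sum -sum_chi_adj -sum_setC2 ?adj_neq // big_mkcond [RHS]big_mkcond.
  by apply: eq_bigr => w _; case: (w \in _); case: (e u w).
rewrite (eq_bigr _ (fun u _ => deg_rest u)) sum_setC2 ?adj_neq // !sumrB sum_deg.
rewrite !sum_chi_adj' !e_irr exy (e_sym y x) exy chiT chiF; ring.
Qed.

Hypothesis e_girth : girth_ge4 e.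

Lemma no_common_nbr x y : e x y -> forall v, ~~ (e v x && e v y).
Proof.
move=> exy v; apply/andP => -[evx evy]; have eyv : e y v by rewrite e_sym.
by have := e_girth exy eyv; rewrite e_sym evx.
Qed.

Lemma M1_delete_edge x y : e x y ->
  (M1a_in e 2 (~: [set x; y]))%:Z =
  (M1 e)%:Z - d x ^+ 2 - d y ^+ 2 + 3 * d x + 3 * d y - 2
  - 2 * nbr_deg x - 2 * nbr_deg y.
Proof.
move=> exy; rewrite /M1a_in Posz_sum.
under eq_bigr => v _ do rewrite PoszX deg_in_chi sum_setC2 ?adj_neq // sum_chi_adj.
have deg_loss v : (d v - chi (e v x) - chi (e v y)) ^+ 2 =
    d v ^+ 2 + chi (e v x) + chi (e v y) - 2 * (chi (e v x) * d v)
    - 2 * (chi (e v y) * d v).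
  have := no_common_nbr exy v.
  by case: (e v x); case: (e v y); rewrite ?chiT ?chiF //= => _; ring.
rewrite (eq_bigr _ (fun v _ => deg_loss v)) sum_setC2 ?adj_neq // !sumrB !big_split /=.
rewrite -!mulr_sumr !nbr_deg' !sum_chi_adj' /M1 M1a_deg.
rewrite !e_irr exy (e_sym y x) exy chiT chiF; ring.
Qed.

Lemma chi_incident v x y : e x y ->
  chi (incident e v x y) = chi (e v x) + chi (e v y) - chi (v == x) - chi (v == y).
Proof.
move=> exy; rewrite /incident.
have [->|vx] := eqVneq v x; first by rewrite (negbTE (adj_neq exy)) e_irr exy chiT chiF; ring.
have [->|vy] := eqVneq v y; first by rewrite e_irr e_sym exy chiT chiF; ring.
have := no_common_nbr exy v.
by case: (e v x); case: (e v y); rewrite ?chiT ?chiF //= => _; ring.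
Qed.

Lemma arc_sum_gamma :
  arc_sum (fun x y => (nbr_deg x + nbr_deg y - d x - d y) * (d x + d y))
  = 2 * (gamma_idx e)%:Z.
Proof.
rewrite /gamma_idx arc_sum_edge_sum; last first.
  by move=> x y; rewrite addnC; apply: eq_bigl => v; rewrite /incident andbCA orbC.
apply: eq_arc_sum => x y exy; rewrite Posz_sum big_mkcond /=.
have weight v : (if incident e v x y then ((deg e v * (deg e x + deg e y))%N)%:Z else 0)
    = chi (incident e v x y) * (d v * (d x + d y)).
  by case: (incident e v x y); rewrite ?chiT ?chiF ?mul1r ?mul0r // PoszM PoszD.
rewrite (eq_bigr _ (fun v _ => weight v)).
under eq_bigr => v _ do rewrite chi_incident // !mulrBl mulrDl !mulrA.
by rewrite !sumrB big_split /= -!mulr_suml !sum_chi_eq !nbr_deg'; ring.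
Qed.

End SimpleGraph.

Theorem lemma2p3 (T : finType) (e : rel T) :
  simple_graph e -> girth_ge4 e ->
  let m : int := (nedges e)%:Z in
  (rho1 e)%:Z =
    (m ^+ 2 + 4 * m + 5) * (M1 e)%:Z - (m + 2) * (Fidx e)%:Z
    - (4 * m + 6) * (M2 e)%:Z + (M1a e 4)%:Z - (M1 e)%:Z ^+ 2
    + (alpha_idx e)%:Z - 2 * m ^+ 2 - 2 * m + 2 * (gamma_idx e)%:Z.
Proof.
move=> [e_sym e_irr] e_girth m; apply: (@mulfI _ 2) => //.
rewrite /rho1 arc_sum_edge_sum //; last by move=> x y; rewrite setUC.
set M1z := (M1 e)%:Z; set d := d e; set S := nbr_deg e.
rewrite (eq_arc_sum (G := fun x y =>
   ((m + 1) * (M1z - 2)) * 1 + (3 * (m + 1) - M1z + 2) * d x ^+ 1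
   + (3 * (m + 1) - M1z + 2) * d y ^+ 1
   - (m + 2) * d x ^+ 2 - (m + 2) * d y ^+ 2 - 2 * (d x * d y)
   - 2 * (m + 1) * S x - 2 * (m + 1) * S y
   + d x * d y * (d x + d y) + d x ^+ 3 + d y ^+ 3
   + 2 * ((S x + S y - d x - d y) * (d x + d y)))); last first.
  by move=> x y exy; rewrite PoszM size_delete_edge // M1_delete_edge // /M1z /m; ring.
rewrite !(arc_sumD, arc_sumN, arc_sumZ) arc_sum1 // !arc_sum_degX // !arc_sum_degX' //.
rewrite arc_sum_M2 // arc_sum_nbr_deg // arc_sum_nbr_deg' // arc_sum_alpha //.
rewrite arc_sum_gamma // /M1z /m /M1 /Fidx; ring.
Qed.
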